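(* Let $\alpha = \frac{P}{4Q}$ where $P$ is an odd integer and $Q$ is a positive integer with $P$ and $Q$ relatively prime, and let $|\phi\rangle \in \mathbb{C}^2$ be any normalized coin state. Then the inhomogeneous quantum walk with parameter $\alpha$ started from $|0,\phi\rangle$ is restricted to the finite interval $[-Q,Q]$: for every time $t \ge 0$ and every $n \in \mathbb{Z}$ with $|n| > Q$, $\Pr(n;t) = 0$.
   Context: The Hilbert space is $\ell^2(\mathbb{Z}) \otimes \mathbb{C}^2$ with orthonormal basis $|n,\xi\rangle = |n\rangle \otimes |\xi\rangle$, $n \in \mathbb{Z}$, $\xi \in \{L,R\}$, where $|L\rangle = (1,0)^T$, $|R\rangle = (0,1)^T$. The shift operator is $W = \sum_n \left( |n-1,L\rangle\langle n,L| + |n+1,R\rangle\langle n,R| \right)$. For $\alpha \in \mathbb{R}$, the coin operator is $C = \sum_n |n\rangle\langle n| \otimes \hat C_n$ with $\hat C_n = \begin{pmatrix} \cos(2\pi\alpha n) & -\sin(2\pi\alpha n) \\ \sin(2\pi\alpha n) & \cos(2\pi\alpha n)\end{pmatrix}$. The one-step evolution of the inhomogeneous quantum walk is $WC$, and starting from $|0,\phi\rangle$ the probability of being at position $n$ at time $t$ is $\Pr(n;t) = \sum_{\xi \in \{L,R\}} |\langle n,\xi| (WC)^t |0,\phi\rangle|^2$. *)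

From Stdlib Require Import Reals ZArith.
From Coquelicot Require Import Coquelicot.
Open Scope R_scope.

(* A (not necessarily normalized) wave function: position n |-> (amp L, amp R). *)
Definition state := Z -> (C * C)%type.

Definition theta (alpha : R) (n : Z) : R := 2 * PI * alpha * IZR n.

(* One step of the walk, psi |-> W C psi, written in components:
   (W C psi)(n)_L = (C_{n+1} psi(n+1))_L = cos th(n+1) psi_L(n+1) - sin th(n+1) psi_R(n+1)
   (W C psi)(n)_R = (C_{n-1} psi(n-1))_R = sin th(n-1) psi_L(n-1) + cos th(n-1) psi_R(n-1) *)
Definition step (alpha : R) (psi : state) : state := fun n =>
  let up := psi (n + 1)%Z in
  let dn := psi (n - 1)%Z in
  ( Cminus (Cmult (RtoC (cos (theta alpha (n + 1)))) (fst up))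
           (Cmult (RtoC (sin (theta alpha (n + 1)))) (snd up)),
    Cplus  (Cmult (RtoC (sin (theta alpha (n - 1)))) (fst dn))
           (Cmult (RtoC (cos (theta alpha (n - 1)))) (snd dn)) ).

Definition init (phi : C * C) : state := fun n =>
  if Z.eq_dec n 0 then phi else (RtoC 0, RtoC 0).

Definition evol (alpha : R) (phi : C * C) (t : nat) : state :=
  Nat.iter t (step alpha) (init phi).

Definition prob (alpha : R) (phi : C * C) (n : Z) (t : nat) : R :=
  (Cmod (fst (evol alpha phi t n)))^2 + (Cmod (snd (evol alpha phi t n)))^2.

Definition normalized (phi : C * C) : Prop :=
  (Cmod (fst phi))^2 + (Cmod (snd phi))^2 = 1.

(* For alpha = P/(4Q) with P odd,
   the coin at the two sites n = +-Q is a rotation by an odd multiple of pi/2, so it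
   sends |L> entirely to |R> and vice versa. Hence the L-component of the amplitude at Q,
   which is the only part of the wave that could move from Q to Q + 1, is always turned
   into an R-component before it gets the chance, and symmetrically at -Q. The invariant
   "no amplitude beyond Q, no L-amplitude at Q and no R-amplitude at -Q" holds initially
   and is preserved by every step of the walk. *)

From Stdlib Require Import Reals ZArith Lia.
From Coquelicot Require Import Coquelicot.
Open Scope R_scope.

Definition vanishes_outside (Q : Z) (psi : state) : Prop :=
  forall n : Z, (Z.abs n > Q)%Z -> psi n = (RtoC 0, RtoC 0).

Definition confined (Q : Z) (psi : state) : Prop :=
  vanishes_outside Q psi /\ fst (psi Q) = RtoC 0 /\ snd (psi (- Q)%Z) = RtoC 0.

Lemma cos_theta_opp (alpha : R) (n : Z) :
  cos (theta alpha (- n)) = cos (theta alpha n).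
Proof.
  unfold theta; rewrite opp_IZR, <- cos_neg; f_equal; ring.
Qed.

Lemma cos_theta_quarter (P Q : Z) :
  Z.odd P = true -> Q <> 0%Z -> cos (theta (IZR P / (4 * IZR Q)) Q) = 0.
Proof.
  intros HP HQ.
  destruct (proj1 (Z.odd_spec P) HP) as [k ->].
  apply cos_eq_0_1; exists k.
  assert (IZR Q <> 0) by (apply not_0_IZR; exact HQ).
  unfold theta; rewrite plus_IZR, mult_IZR; field; assumption.
Qed.

Lemma init_confined (Q : Z) (phi : C * C) : (0 < Q)%Z -> confined Q (init phi).
Proof.
  intro HQ; unfold confined, vanishes_outside, init.
  split; [|split].
  - intros n Hn; destruct (Z.eq_dec n 0); [lia | reflexivity].
  - destruct (Z.eq_dec Q 0); [lia | reflexivity].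
  - destruct (Z.eq_dec (- Q) 0); [lia | reflexivity].
Qed.

Section ConfiningStep.

Variables (alpha : R) (Q : Z).
Hypothesis HQ : (0 <= Q)%Z.
Hypothesis cos_Q : cos (theta alpha Q) = 0.

Lemma step_confined (psi : state) : confined Q psi -> confined Q (step alpha psi).
Proof.
  intros [out [fst_Q snd_mQ]].
  assert (cos_mQ : cos (theta alpha (- Q)) = 0) by (rewrite cos_theta_opp; exact cos_Q).
  unfold confined, vanishes_outside, step; simpl.
  split; [|split].
  - intros n Hn.
    destruct (Z.eq_dec n (Q + 1)) as [->|HnQ];
      [|destruct (Z.eq_dec n (- Q - 1)) as [->|HnmQ]].
    + rewrite (out (Q + 1 + 1)%Z) by lia.
      replace (Q + 1 - 1)%Z with Q by ring.
      destruct (psi Q) as [a b]; simpl in fst_Q |- *; subst a.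
      rewrite cos_Q; f_equal; ring.
    + rewrite (out (- Q - 1 - 1)%Z) by lia.
      replace (- Q - 1 + 1)%Z with (- Q)%Z by ring.
      destruct (psi (- Q)%Z) as [a b]; simpl in snd_mQ |- *; subst b.
      rewrite cos_mQ; f_equal; ring.
    + rewrite (out (n + 1)%Z), (out (n - 1)%Z) by lia; simpl; f_equal; ring.
  - rewrite (out (Q + 1)%Z) by lia; simpl; ring.
  - rewrite (out (- Q - 1)%Z) by lia; simpl; ring.
Qed.

End ConfiningStep.

Lemma prob_vanishing (alpha : R) (phi : C * C) (n : Z) (t : nat) :
  evol alpha phi t n = (RtoC 0, RtoC 0) -> prob alpha phi n t = 0.
Proof.
  intro H; unfold prob; rewrite H; simpl; rewrite Cmod_0; ring.
Qed.

Theorem lemma1 (P Q : Z) (phi : C * C) :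
  Z.odd P = true -> (0 < Q)%Z -> Z.gcd P Q = 1%Z -> normalized phi ->
  forall (t : nat) (n : Z), (Z.abs n > Q)%Z ->
    prob (IZR P / (4 * IZR Q)) phi n t = 0.
Proof.
  intros HP HQ _ _ t n Hn.
  set (alpha := IZR P / (4 * IZR Q)).
  assert (cos_Q : cos (theta alpha Q) = 0) by (apply cos_theta_quarter; [exact HP | lia]).
  assert (Hconf : confined Q (evol alpha phi t)).
  { induction t as [|t IH].
    - apply init_confined; exact HQ.
    - apply step_confined; [lia | exact cos_Q | exact IH]. }
  apply prob_vanishing, (proj1 Hconf), Hn.
Qed.
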